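(* Let $S$ be a semigroup, let $a\in S$, and define $P=\{x\in Sa : x\,\mathscr L\, ax\}$. If $aSa\subseteq\operatorname{Reg}(S)$, then $P\subseteq\operatorname{Reg}(S)$; consequently, in this case $\operatorname{Reg}(Sa)=P$, and this set is a right ideal of the semigroup $Sa$ (i.e. $xy\in P$ for all $x\in P$, $y\in Sa$).
   Context: $Sa=\{xa:x\in S\}$, $aSa=\{axa:x\in S\}$. For a semigroup $T$, $\operatorname{Reg}(T)=\{x\in T: x=xyx \text{ for some } y\in T\}$. $\mathscr L$ is Green's $\mathscr L$-relation on $S$: $x\,\mathscr L\,y$ iff $S^1x=S^1y$, $S^1$ being $S$ with an identity adjoined if necessary. *)

Section SemigroupDefs.
Variable S : Type.
Variable mul : S -> S -> S.

Definition Sa (a : S) (x : S) : Prop := exists s, x = mul s a.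

Definition aSa (a : S) (z : S) : Prop := exists x, z = mul (mul a x) a.

Definition RegIn (T : S -> Prop) (x : S) : Prop :=
  T x /\ exists y, T y /\ x = mul (mul x y) x.

Definition Reg (x : S) : Prop := RegIn (fun _ => True) x.

Definition S1 (x : S) (z : S) : Prop := z = x \/ exists s, z = mul s x.

Definition GreenL (x y : S) : Prop := forall z, S1 x z <-> S1 y z.

Definition Pset (a : S) (x : S) : Prop := Sa a x /\ GreenL x (mul a x).

End SemigroupDefs.

Arguments Sa {S} mul a x.
Arguments aSa {S} mul a z.
Arguments RegIn {S} mul T x.
Arguments Reg {S} mul x.
Arguments S1 {S} mul x z.
Arguments GreenL {S} mul x y.
Arguments Pset {S} mul a x.

From Stdlib Require Import Setoid.

(* Whenever [x] lies in [S^1 w] for a regular element [w = w y w], we have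
   [x = x y w], since right multiplication by [y w] fixes [S^1 w].  For
   [x] in [P] take [w = a x], which lies in [aSa] because [x] lies in [Sa]:
   then [x = x (y a) x] with [y a] in [Sa], so [x] is regular in [Sa].
   Conversely [x = x (t a) x] puts [x] in [S (a x)], so [x] is L-related
   to [a x].  Since L is a right congruence, [P] is a right ideal of [Sa]. *)

Section GreenL.
Variable S : Type.
Variable mul : S -> S -> S.
Hypothesis assoc : forall x y z : S, mul x (mul y z) = mul (mul x y) z.

Lemma S1_refl x : S1 mul x x.
Proof. left; reflexivity. Qed.

Lemma S1_mull s x : S1 mul x (mul s x).
Proof. right; exists s; reflexivity. Qed.

Lemma S1_trans x y z : S1 mul x y -> S1 mul y z -> S1 mul x z.
Proof.
  intros [-> | [s ->]] [-> | [t ->]].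
  - apply S1_refl.
  - apply S1_mull.
  - apply S1_mull.
  - rewrite assoc; apply S1_mull.
Qed.

Lemma S1_mulr x z y : S1 mul x z -> S1 mul (mul x y) (mul z y).
Proof.
  intros [-> | [s ->]].
  - apply S1_refl.
  - rewrite <- assoc; apply S1_mull.
Qed.

Lemma GreenL_S1 x y : GreenL mul x y <-> S1 mul x y /\ S1 mul y x.
Proof.
  split.
  - intros HL; split; [apply HL | apply HL]; apply S1_refl.
  - intros [Hxy Hyx] z; split; intros Hz; eapply S1_trans; eassumption.
Qed.

Lemma GreenL_mull s x : GreenL mul x (mul s x) <-> S1 mul (mul s x) x.
Proof.
  rewrite GreenL_S1; split; [intros [_ H] | intros H; split]; auto.
  apply S1_mull.
Qed.

Lemma S1_regular_mulr w y x :
  w = mul (mul w y) w -> S1 mul w x -> x = mul (mul x y) w.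
Proof.
  intros Hw [-> | [u ->]]; [exact Hw |].
  rewrite <- (assoc u w y), <- (assoc u (mul w y) w), <- Hw; reflexivity.
Qed.

Variable a : S.

Lemma aSa_mul_Sa x : Sa mul a x -> aSa mul a (mul a x).
Proof. intros [s ->]; exists s; apply assoc. Qed.

Lemma Pset_RegIn_Sa (haSa : forall z, aSa mul a z -> Reg mul z) x :
  Pset mul a x -> RegIn mul (Sa mul a) x.
Proof.
  intros [Hx HL]; split; [exact Hx |].
  destruct (haSa _ (aSa_mul_Sa x Hx)) as [_ [y [_ Hy]]].
  exists (mul y a); split; [exists y; reflexivity |].
  rewrite (assoc x y a), <- (assoc (mul x y) a x).
  apply (S1_regular_mulr _ _ _ Hy), (proj1 (GreenL_mull _ _) HL).
Qed.

Lemma RegIn_Sa_Pset x : RegIn mul (Sa mul a) x -> Pset mul a x.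
Proof.
  intros [Hx [y [[t ->] Hy]]]; split; [exact Hx |].
  apply GreenL_mull; rewrite Hy at 2.
  rewrite (assoc x t a), <- (assoc (mul x t) a x).
  apply S1_mull.
Qed.

Lemma Pset_mulr x y : Pset mul a x -> Sa mul a y -> Pset mul a (mul x y).
Proof.
  intros [_ HL] [t ->]; split.
  - rewrite assoc; exists (mul x t); reflexivity.
  - apply GreenL_mull; rewrite assoc.
    apply S1_mulr, (proj1 (GreenL_mull _ _) HL).
Qed.

End GreenL.

Theorem corollary3p3 (S : Type) (mul : S -> S -> S)
  (assoc : forall x y z : S, mul x (mul y z) = mul (mul x y) z)
  (a : S)
  (haSa : forall z, aSa mul a z -> Reg mul z) :
  (forall x, Pset mul a x -> Reg mul x) /\
  (forall x, RegIn mul (Sa mul a) x <-> Pset mul a x) /\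
  (forall x y, Pset mul a x -> Sa mul a y -> Pset mul a (mul x y)).
Proof.
  split; [| split].
  - intros x Hx.
    destruct (Pset_RegIn_Sa S mul assoc a haSa x Hx) as [_ [y [_ Hy]]].
    split; [exact I |]; exists y; split; [exact I | exact Hy].
  - intros x; split; [apply RegIn_Sa_Pset, assoc | apply Pset_RegIn_Sa; assumption].
  - apply Pset_mulr, assoc.
Qed.
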